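(* Let $n\ge 4$ and let $\mathcal{G}=\{G_1,\ldots,G_n\}$ be a family of graphs on the same vertex set of size $n$, where $G_i\cong K_1\vee(K_{n-2}\cup K_1)$ for every $i$. Then $\mathcal{G}$ admits a rainbow Hamiltonian cycle unless $G_1=G_2=\cdots=G_n$.
   Context: $K_1\vee(K_{n-2}\cup K_1)$ is $K_{n-1}$ plus one pendant vertex adjacent to one vertex of the $K_{n-1}$. $G_i=G_j$ means equal edge sets on the common vertex set. A rainbow Hamiltonian cycle in $\mathcal{G}$ is a Hamiltonian cycle on the common vertex set whose $n$ edges can be labeled $e_1,\ldots,e_n$ with $e_i\in E(G_i)$ for each $i$. *)

From mathcomp Require Import all_boot all_fingroup.
Set Implicit Arguments. Unset Strict Implicit. Unset Printing Implicit Defensive.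

Definition is_graph (n : nat) (E : {set {set 'I_n}}) : Prop :=
  forall e, e \in E -> #|e| = 2.

Definition edge (n : nat) (x y : 'I_n) : {set 'I_n} := [set x; y].

Definition graph_iso (n : nat) (E F : {set {set 'I_n}}) : Prop :=
  exists p : {perm 'I_n}, forall x y : 'I_n, x != y ->
    (edge x y \in E) = (edge (p x) (p y) \in F).

(* K_1 v (K_{n-2} u K_1): vertex 0 is the pendant vertex, vertex 1 its unique
   neighbour; vertices 1..n-1 form a clique K_{n-1}. *)
Definition pendant_clique (n : nat) : {set {set 'I_n}} :=
  [set e : {set 'I_n} | [exists x : 'I_n, exists y : 'I_n,
     [&& x != y, e == edge x y &
         ((0 < val x) && (0 < val y)) || ((val x == 0) && (val y == 1))]]].

Definition cnext (n : nat) (i : 'I_n) : 'I_n := ordS i.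

(* A rainbow Hamiltonian cycle of the family G : 'I_n -> graphs: a cyclic
   ordering s of all n vertices (Hamiltonian cycle s_0 s_1 ... s_{n-1} s_0)
   and a bijection c from the n cycle edges to the n graphs such that the
   i-th cycle edge {s_i, s_{i+1}} belongs to G_(c i). *)
Definition rainbow_ham_cycle (n : nat) (G : 'I_n -> {set {set 'I_n}}) : Prop :=
  exists (s : {perm 'I_n}) (c : {perm 'I_n}),
    forall i : 'I_n, edge (s i) (s (cnext i)) \in G (c i).

From mathcomp Require Import all_boot all_fingroup.
From mathcomp Require Import zify.
Set Implicit Arguments. Unset Strict Implicit. Unset Printing Implicit Defensive.

(* Each G_i is determined by its pendant vertex a_i and the neighbour b_i of
   a_i: an edge lies in G_i iff it avoids a_i or equals {a_i, b_i}.  If all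
   the a_i but possibly one, a_j, equal some v, put v last on the cycle; then
   every cycle edge avoids v except the two at v: the edge {b_i, v} before v
   is coloured by G_i for some i <> j, and the edge after v by G_j, choosing
   its other end in G_j (when a is constant this needs b_i <> b_j).
   Otherwise there are indices x0, x1, z, y with a_y not in {a_x0, a_x1} and
   a_z <> a_x0; give the cycle edges 0, 1, n-2, n-1 the colours x0, x1, z, y
   and place each pendant vertex just before the first cycle edge of a colour
   having it as pendant.  Then no cycle edge meets the pendant vertex of its
   colour: at the wrap-around this is what the conditions on x0, x1, z, y
   guarantee. *)

Lemma exists_notin (T : finType) (s : seq T) :
  size s < #|T| -> exists x, x \notin s.
Proof.
move=> lt_s_T; apply/existsP; apply: contraTT lt_s_T => /existsPn sT.
rewrite -leqNgt; apply: leq_trans (card_size s).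
by apply/subset_leq_card/subsetP => x _; have := sT x; rewrite negbK.
Qed.

Lemma perm_extend (T : finType) (f : T -> T) (D : {set T}) :
  {in D &, injective f} -> exists p : {perm T}, {in D, p =1 f}.
Proof.
move Dk : #|D| => k; elim: k D Dk => [|k IH] D Dk injf.
  by exists 1%g => x; move/eqP: Dk; rewrite cards_eq0 => /eqP ->; rewrite inE.
have [x xD] : exists x, x \in D by apply/set0Pn; rewrite -card_gt0 Dk.
have [||p pf] := IH (D :\ x).
- by move: Dk; rewrite (cardsD1 x) xD => -[].
- by apply: sub_in2 injf => y /setD1P[].
exists (p * tperm (p x) (f x))%g => y yD; rewrite permM.
have [->|yx] := eqVneq y x; first by rewrite tpermL.
have yDx : y \in D :\ x by rewrite !inE yx.
rewrite (pf y yDx) tpermD //.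
- by rewrite -(pf y yDx) (inj_eq perm_inj) eq_sym.
- by apply: contra_neq yx => fxy; apply: injf.
Qed.

Lemma perm_extend_seq (T : finType) (s t : seq T) :
  uniq s -> uniq t -> size s = size t -> exists p : {perm T}, map p s = t.
Proof.
case: s => [|x0 s'] us ut st; first by exists 1%g; case: t ut st.
set s := x0 :: s' in us st *.
have [|p pf] := @perm_extend T (fun x => nth x0 t (index x s)) [set x in s].
  move=> x y; rewrite !in_set => xs ys /eqP.
  rewrite (nth_uniq x0) -?st ?index_mem // => /eqP eq_idx.
  by rewrite -(nth_index x0 xs) -(nth_index x0 ys) eq_idx.
apply/(ex_intro _ p)/(@eq_from_nth _ x0); rewrite size_map // => i lt_i.
by rewrite (nth_map x0) // pf ?in_set ?mem_nth // index_uniq.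
Qed.

Lemma eq_set2P (T : finType) (x y x' y' : T) : x != y ->
  [set x; y] = [set x'; y'] -> (x' = x /\ y' = y) \/ (x' = y /\ y' = x).
Proof.
move=> xy exy; have: x \in [set x'; y'] by rewrite -exy set21.
have: y \in [set x'; y'] by rewrite -exy set22.
rewrite !in_set2 => /orP[]/eqP yx' /orP[]/eqP xx'; subst.
all: first [by left | by right | by rewrite eqxx in xy].
Qed.

(* For x != y: adjacency of x and y in the copy of K_1 v (K_{n-2} u K_1) whose
   pendant vertex a is attached to b. *)
Definition pendant_adj (T : eqType) (a b x y : T) : bool :=
  [|| (x != a) && (y != a), (x == a) && (y == b) | (x == b) && (y == a)].

Lemma pendant_adj_inj (T T' : eqType) (f : T -> T') a b x y : injective f ->
  pendant_adj (f a) (f b) (f x) (f y) = pendant_adj a b x y.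
Proof. by move=> injf; rewrite /pendant_adj !(inj_eq injf). Qed.

Lemma pendant_adj_off (T : eqType) (a b x y : T) :
  x != a -> y != a -> pendant_adj a b x y.
Proof. by rewrite /pendant_adj => -> ->. Qed.

Lemma pendant_clique_edge n (x y : 'I_n.+2) : x != y ->
  (edge x y \in pendant_clique n.+2) = pendant_adj ord0 (inord 1) x y.
Proof.
move=> xy; have eq1 (z : 'I_n.+2) : (z == inord 1) = (val z == 1).
  by rewrite -val_eqE /= inordK.
rewrite /pendant_adj !eq1 -!val_eqE /= -!lt0n inE.
apply/existsP/idP => [[x' /existsP[y' /and3P[_ /eqP exy]]] | ].
  by case: (eq_set2P xy exy) => -[-> ->] /orP[] /andP[-> ->]; rewrite ?orbT.
have yx : y != x by rewrite eq_sym.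
case/or3P => P; [exists x | exists x | exists y]; apply/existsP;
  [exists y | exists y | exists x]; rewrite ?xy ?yx ?eqxx /= ?P ?orbT //.
by rewrite /edge setUC eqxx; case/andP: P => -> ->; rewrite orbT.
Qed.

Lemma graph_iso_pendant_clique n (E : {set {set 'I_n.+2}}) :
  graph_iso E (pendant_clique n.+2) ->
  exists a b : 'I_n.+2, a != b /\
    forall x y, x != y -> (edge x y \in E) = pendant_adj a b x y.
Proof.
case=> p Ep; exists (p^-1 ord0)%g, (p^-1 (inord 1))%g; split.
  by rewrite (inj_eq perm_inj) -val_eqE /= inordK.
move=> x y xy; rewrite Ep // pendant_clique_edge ?(inj_eq perm_inj) //.
by rewrite -[RHS](pendant_adj_inj _ _ _ _ (@perm_inj _ p)) !permKV.
Qed.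

Lemma graph_eq_edges n (E F : {set {set 'I_n}}) : is_graph E -> is_graph F ->
  (forall x y, x != y -> (edge x y \in E) = (edge x y \in F)) -> E = F.
Proof.
move=> gE gF EF; apply/setP => e; apply/idP/idP => eG.
  have /eqP/cards2P[x [y [xy exy]]] := gE e eG.
  by move: eG; rewrite exy -/(edge x y) EF.
have /eqP/cards2P[x [y [xy exy]]] := gF e eG.
by move: eG; rewrite exy -/(edge x y) EF.
Qed.

Lemma uniq4 (T : eqType) (x0 x1 z y : T) : x0 != x1 -> x0 != z -> x0 != y ->
  x1 != z -> x1 != y -> z != y -> uniq [:: x0; x1; z; y].
Proof.
by move=> *; rewrite /= !inE !negb_or !andbT; do !(apply/andP; split).
Qed.

Section AlmostConstant.
Variables (I : finType) (T : eqType) (a : I -> T).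

Definition almost_constant := exists v j, forall k, k != j -> a k = v.

(* Four distinct indices; [x0, x1] will occupy the first two positions of the
   cycle and [z, y] the last two. *)
Definition spread := exists x0 x1 z y,
  [/\ uniq [:: x0; x1; z; y], a y != a x0, a y != a x1 & a z != a x0].

Lemma neq_of_image {x y : I} : a x != a y -> x != y.
Proof. by apply: contra_neq => ->. Qed.

Lemma two_valued_almost_constant_or_spread i j : a j != a i ->
  (forall k, a k = a i \/ a k = a j) -> almost_constant \/ spread.
Proof.
move=> aji two_values.
have other_occurrence x y : (forall k, a k = a x \/ a k = a y) ->
    (exists x1, x1 != x /\ a x1 = a x) \/ forall k, k != x -> a k = a y.
  move=> xy_values; case: (boolP [exists k, (k != x) && (a k == a x)]).
    by case/existsP=> x1 /andP[x1x /eqP ax1]; left; exists x1.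
  move/existsPn=> h; right=> k kx; case: (xy_values k) => // akx.
  by move: (h k); rewrite kx akx eqxx.
have [[i1 [i1i ai1]] | i_unique] := other_occurrence i j two_values; last first.
  by left; exists (a j), i.
have [[j1 [j1j aj1]] | j_unique] :=
  other_occurrence j i (fun k => iffLR (or_comm _ _) (two_values k)).
  2: by left; exists (a i), j.
right; exists i, i1, j1, j; rewrite ai1 aj1; split => //.
apply: uniq4; rewrite // 1?eq_sym //.
all: by apply: neq_of_image; rewrite ?ai1 ?aj1.
Qed.

Lemma almost_constant_or_spread : 3 < #|I| -> almost_constant \/ spread.
Proof.
move=> card_I.
have [i _] : exists i : I, i \notin [::].
  by apply: exists_notin; apply: leq_trans card_I.
have [a_const | [j aji]] : (forall k, a k = a i) \/ exists j, a j != a i.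
- case: (boolP [forall k, a k == a i]) => [/forallP a_const | /forallPn[j]].
    by left=> k; apply/eqP.
  by right; exists j.
- by left; exists (a i), i.
have [[k [aki akj]] | two_values] :
    (exists k, a k != a i /\ a k != a j) \/ forall k, a k = a i \/ a k = a j.
- case: (boolP [exists k, (a k != a i) && (a k != a j)]).
    by case/existsP=> k /andP[]; left; exists k.
  move/existsPn=> h; right=> k; move: (h k).
  by rewrite negb_and !negbK => /orP[]/eqP; auto.
- have [l] := @exists_notin _ [:: i; j; k] card_I.
  rewrite !inE !negb_or => /and3P[li lj lk].
  move: (neq_of_image aji) (neq_of_image aki) (neq_of_image akj) => ji ki kj.
  right; have [ali | ali] := eqVneq (a l) (a i).
    exists j, i, l, k; split; rewrite ?ali 1?[a i == _]eq_sym //.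
    by apply: uniq4; rewrite // eq_sym.
  by exists i, j, l, k; split => //; apply: uniq4; rewrite // eq_sym.
- exact: two_valued_almost_constant_or_spread aji two_values.
Qed.

End AlmostConstant.

Lemma cnext_inj m : injective (@cnext m).
Proof. exact: ordS_inj. Qed.

Lemma cnext_ord_pred m : cancel (@ord_pred m) (@cnext m).
Proof. exact: ord_predK. Qed.

Lemma val_cnext m (k : 'I_m.+1) :
  val (cnext k) = if k == ord_max then 0 else k.+1.
Proof.
rewrite /= -val_eqE /=; case: eqP => [-> | /eqP k_max]; first by rewrite modnn.
by rewrite modn_small //; have := ltn_ord k; lia.
Qed.

Lemma cnext_max m : cnext (ord_max : 'I_m.+1) = ord0.
Proof. by apply: val_inj; rewrite val_cnext eqxx. Qed.

Lemma cnext_neq m (k : 'I_m.+2) : cnext k != k.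
Proof. by rewrite -val_eqE val_cnext; case: ifP => [/eqP -> | _] /=; lia. Qed.

Lemma perm_before_first_occurrence m (c : 'I_m -> 'I_m) :
  exists s : {perm 'I_m}, forall k, exists j,
    [/\ s j = c k, c (cnext j) = c k & forall i, c i = c k -> cnext j <= i].
Proof.
pose first k := [arg min_(i < k | c i == c k) val i].
have first_spec k : c (first k) = c k /\ forall i, c i = c k -> first k <= i.
  rewrite /first; case: arg_minnP => // f /eqP cf min_f.
  by split=> // i /eqP/min_f.
have first_first k : first (first k) = first k.
  have [[cf min_f] [cff min_ff]] := (first_spec k, first_spec (first k)).
  by apply/val_inj/eqP; rewrite eqn_leq min_ff // min_f // cff.
have [|s sD] :=
  @perm_extend _ (c \o @cnext m) [set j | first (cnext j) == cnext j].
  move=> j1 j2; rewrite !inE => /eqP f1 /eqP f2 /= c12.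
  apply/cnext_inj/val_inj/eqP; rewrite eqn_leq -{1}f1 -{2}f2.
  by rewrite (first_spec _).2 // (first_spec _).2.
exists s => k; have [cf min_f] := first_spec k.
exists (ord_pred (first k)).
by rewrite cnext_ord_pred sD ?inE /= ?cnext_ord_pred ?first_first.
Qed.

Section RainbowPendantCycle.
Variable n : nat.
Implicit Types (a b : 'I_n.+4 -> 'I_n.+4) (k : 'I_n.+4).

Definition rainbow_pendant_cycle a b := exists g s : {perm 'I_n.+4},
  forall k, pendant_adj (a (g k)) (b (g k)) (s k) (s (cnext k)).

Definition penult : 'I_n.+4 := inord n.+2.

Lemma val_penult : val penult = n.+2.
Proof. exact: inordK. Qed.

Lemma cnext_penult : cnext penult = ord_max.
Proof.
apply: val_inj; rewrite val_cnext ifN ?val_penult //.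
by rewrite -val_eqE /= val_penult; lia.
Qed.

Lemma cnext2_max : cnext (cnext (ord_max : 'I_n.+4)) = inord 1.
Proof. by apply: val_inj; rewrite cnext_max val_cnext /= inordK. Qed.

Lemma uniq_positions : uniq [:: ord0; inord 1; penult; ord_max].
Proof. by apply: uniq4; rewrite -val_eqE /= ?val_penult ?inordK //; lia. Qed.

Lemma cnext_le k : cnext k <= k -> k = ord_max.
Proof. by rewrite val_cnext; case: eqP => // _; rewrite ltnn. Qed.

Lemma cnext2_le k : cnext (cnext k) <= k -> k = penult \/ k = ord_max.
Proof.
move=> le_k; have [-> | k_max] := eqVneq k ord_max; [by right | left].
have [ck_max | ck_max] := eqVneq (cnext k) ord_max.
  by apply: cnext_inj; rewrite ck_max cnext_penult.
by move: le_k; rewrite !val_cnext (negbTE ck_max) (negbTE k_max); lia.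
Qed.

Lemma pendant_adj_off_last (s : {perm 'I_n.+4}) v w k : s ord_max = v ->
  k != ord_max -> k != penult -> pendant_adj v w (s k) (s (cnext k)).
Proof.
move=> <- k_max k_pen; apply: pendant_adj_off; rewrite (inj_eq perm_inj) //.
by rewrite -cnext_penult (inj_eq (@cnext_inj _)).
Qed.

Lemma rainbow_almost_constant a b v j i u : (forall k, a k != b k) ->
  (forall k, k != j -> a k = v) -> i != j -> u \notin [:: b i; v] ->
  pendant_adj (a j) (b j) v u -> rainbow_pendant_cycle a b.
Proof.
move=> ab a_v ij u_fresh adj_j.
have biv : b i != v by rewrite -(a_v i ij) eq_sym.
have [||//|g [g_pen g_max]] :=
  @perm_extend_seq _ [:: penult; ord_max] [:: i; j].
- by rewrite /= inE andbT -val_eqE /= val_penult; lia.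
- by rewrite /= inE andbT.
have [||//|s [s0 s_pen s_max]] :=
  @perm_extend_seq _ [:: ord0; penult; ord_max] [:: u; b i; v].
- by rewrite /= !inE -!val_eqE /= val_penult; lia.
- by rewrite /= u_fresh inE andbT biv.
exists g, s => k; have [-> | k_max] := eqVneq k ord_max.
  by rewrite g_max s_max cnext_max s0.
have [-> | k_pen] := eqVneq k penult.
  by rewrite g_pen a_v // s_pen cnext_penult s_max /pendant_adj !eqxx !orbT.
by rewrite a_v ?(pendant_adj_off_last _ s_max) // -g_max (inj_eq perm_inj).
Qed.

Lemma rainbow_spread a b : spread a -> rainbow_pendant_cycle a b.
Proof.
case=> x0 [x1] [z] [y] [uniq_x y0 y1 z0].
have [g [g0 g1 g_pen g_max]] :=
  perm_extend_seq uniq_positions uniq_x (erefl : size _ = size _).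
have [s s_first] := perm_before_first_occurrence (a \o g).
exists g, s => k; have [j [/= sj cj min_j]] := s_first k.
rewrite -sj; apply: pendant_adj_off; rewrite (inj_eq perm_inj).
  apply/eqP=> kj; subst j; have /cnext_le k_max := min_j k erefl; subst k.
  by move: cj y0; rewrite /= cnext_max g0 g_max => ->; rewrite eqxx.
apply/eqP=> kj; subst j; have /cnext2_le[] := min_j k erefl => k_eq; subst k.
  move: cj z0; rewrite /= cnext_penult cnext_max g0 g_pen => ->.
  by rewrite eqxx.
by move: cj y1; rewrite /= cnext2_max g1 g_max => ->; rewrite eqxx.
Qed.

Lemma rainbow_pendant_cycle_exists a b : (forall k, a k != b k) ->
  ~ (forall i j, a i = a j /\ b i = b j) -> rainbow_pendant_cycle a b.
Proof.
move=> ab not_const; have card_I : 3 < #|'I_n.+4| by rewrite card_ord.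
have [[v [j a_v]] | a_spread] := almost_constant_or_spread a card_I; last first.
  exact: rainbow_spread.
have [aj_v | aj_v] := eqVneq (a j) v; last first.
  have [u] := exists_notin (card_I : size [:: b (cnext j); v; a j] < _).
  rewrite !inE !negb_or => /and3P[ub uv uaj].
  apply: (rainbow_almost_constant (u := u) ab a_v (cnext_neq j)).
    by rewrite !inE negb_or ub uv.
  by apply: pendant_adj_off; rewrite // eq_sym.
have a_const k : a k = v by have [-> | /a_v] := eqVneq k j.
case: (boolP [exists i, exists j', b i != b j']); last first.
  move/existsPn=> b_const; case: not_const => i j'.
  rewrite !a_const; split=> //.
  by move: (b_const i) => /existsPn/(_ j')/negPn/eqP.
case/existsP=> i /existsP[j' bij].
apply: (rainbow_almost_constant (u := b j') ab (fun k _ => a_const k)).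
- exact: neq_of_image bij.
- by rewrite !inE negb_or eq_sym bij -(a_const j') eq_sym ab.
- by rewrite a_const /pendant_adj !eqxx orbT.
Qed.

End RainbowPendantCycle.

Theorem mainTheorem4 (n : nat) (G : 'I_n -> {set {set 'I_n}}) :
  4 <= n ->
  (forall i, is_graph (G i)) ->
  (forall i, graph_iso (G i) (pendant_clique n)) ->
  ~ (forall i j, G i = G j) ->
  rainbow_ham_cycle G.
Proof.
case: n G => [|[|[|[|n]]]] G // _ graphG isoG not_const.
have /fin_all_exists[a /fin_all_exists[b Gab]] :=
  graph_iso_pendant_clique (isoG _).
have [|g [s adj]] := @rainbow_pendant_cycle_exists n a b (fun i => (Gab i).1).
  move=> ab_const; apply: not_const => i j; apply: graph_eq_edges => // x y xy.
  by rewrite (Gab i).2 // (Gab j).2 //; case: (ab_const i j) => -> ->.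
exists s, g => k; rewrite (Gab (g k)).2 // (inj_eq perm_inj) eq_sym.
exact: cnext_neq.
Qed.
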